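(* Let $H\ge1$, and for $h=1,\dots,H$ let $\boldsymbol{P}^h\in\mathbb{R}^{n\times n}$, $\boldsymbol{A}^h=\mathrm{softmax}(\boldsymbol{P}^h)$, and $\boldsymbol{W}_V^h,\boldsymbol{W}_O^h\in\mathbb{R}^{d\times d}$. Let $\alpha=\max_h\max_{i,j}\lvert\boldsymbol{P}^h_{ij}\rvert$, $\sigma_1=\max_h\lVert\boldsymbol{W}_V^h\rVert_2$, $\sigma_2=\max_h\lVert\boldsymbol{W}_O^h\rVert_2$. For $\boldsymbol{X}\in\mathbb{R}^{n\times d}$ define $\mathrm{MSA}(\boldsymbol{X})=\sum_{h=1}^H\boldsymbol{A}^h\boldsymbol{X}\boldsymbol{W}_V^h\boldsymbol{W}_O^h$. Then $$\lVert\mathrm{HC}[\mathrm{MSA}(\boldsymbol{X})]\rVert_F\le\sigma_1\sigma_2H\sqrt{\frac{ne^{2\alpha}}{e^{2\alpha}+n-1}}\;\lVert\mathrm{HC}[\boldsymbol{X}]\rVert_F.$$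
   Context: $\mathrm{softmax}$ is applied row-wise: $\mathrm{softmax}(\boldsymbol{P})_{ij}=e^{\boldsymbol{P}_{ij}}/\sum_t e^{\boldsymbol{P}_{it}}$. For $\boldsymbol{X}\in\mathbb{R}^{n\times d}$, $\mathrm{HC}[\boldsymbol{X}]=(\boldsymbol{I}-\frac1n\boldsymbol{1}\boldsymbol{1}^T)\boldsymbol{X}$ with $\boldsymbol{1}$ the all-ones vector. $\lVert\cdot\rVert_F$ is the Frobenius norm, $\lVert\cdot\rVert_2$ the spectral norm. *)

From HB Require Import structures.
From mathcomp Require Import all_boot all_order all_algebra.
From mathcomp Require Import all_classical all_reals all_analysis.
Set Implicit Arguments. Unset Strict Implicit. Unset Printing Implicit Defensive.
Import Order.TTheory GRing.Theory Num.Theory.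
Local Open Scope ring_scope.
Local Open Scope classical_set_scope.

Definition softmax (R : realType) (n : nat) (P : 'M[R]_n) : 'M[R]_n :=
  \matrix_(i, j) (expR (P i j) / \sum_(t < n) expR (P i t)).

Definition HC (R : realType) (n d : nat) (X : 'M[R]_(n, d)) : 'M[R]_(n, d) :=
  (1%:M - n%:R^-1 *: const_mx 1) *m X.

Definition frob (R : realType) (m n : nat) (A : 'M[R]_(m, n)) : R :=
  Num.sqrt (\sum_(i < m) \sum_(j < n) (A i j) ^+ 2).

Definition vnorm2 (R : realType) (m : nat) (v : 'cV[R]_m) : R :=
  Num.sqrt (\sum_(i < m) (v i 0) ^+ 2).

Definition specnorm (R : realType) (m n : nat) (A : 'M[R]_(m, n)) : R :=
  sup [set vnorm2 (A *m v) | v in [set v : 'cV[R]_n | vnorm2 v <= 1]].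

Definition MSA (R : realType) (n d H : nat) (P : 'I_H -> 'M[R]_n)
  (WV WO : 'I_H -> 'M[R]_d) (X : 'M[R]_(n, d)) : 'M[R]_(n, d) :=
  \sum_(h < H) (softmax (P h) *m X *m WV h *m WO h).

From HB Require Import structures.
From mathcomp Require Import all_boot all_order all_algebra.
From mathcomp Require Import all_classical all_reals all_analysis.
From mathcomp Require Import ring lra.
Set Implicit Arguments. Unset Strict Implicit. Unset Printing Implicit Defensive.
Import Order.TTheory GRing.Theory Num.Theory.
Local Open Scope ring_scope.

(* Centering commutes with right multiplication and with sums, so it suffices
   to bound one head, and the factors W_V, W_O cost their spectral norms.  A
   softmax matrix A is row-stochastic, hence HC[AX] = HC[A HC[X]]; by Jensen
   applied row by row, a row-stochastic A scales the Frobenius norm by at most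
   the square root of its largest column sum.  Every softmax entry is at most
   e^(2a) / (e^(2a) + n - 1), so that column sum is at most
   n e^(2a) / (e^(2a) + n - 1).  Centering is a Frobenius contraction, and the
   triangle inequality over the H heads gives the factor H. *)

Section SumsOfSquares.
Variables (R : realDomainType) (I : finType).
Implicit Types (a b w y : I -> R).

Lemma sumr_sqr_ge0 a : 0 <= \sum_i a i ^+ 2.
Proof. by apply: sumr_ge0 => i _; rewrite sqr_ge0. Qed.

Lemma lagrange_identity a b :
  2 * ((\sum_i a i ^+ 2) * (\sum_i b i ^+ 2) - (\sum_i a i * b i) ^+ 2) =
  \sum_i \sum_j (a i * b j - a j * b i) ^+ 2.
Proof.
have swap : \sum_i \sum_j a i ^+ 2 * b j ^+ 2 = \sum_i \sum_j a j ^+ 2 * b i ^+ 2.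
  by rewrite exchange_big.
rewrite expr2 !big_distrlr /=.
transitivity (\sum_i \sum_j a i ^+ 2 * b j ^+ 2 + \sum_i \sum_j a j ^+ 2 * b i ^+ 2
              - 2 * \sum_i \sum_j a i * b i * (a j * b j)); first by rewrite -swap; ring.
rewrite mulr_sumr -big_split -sumrB /=; apply: eq_bigr => i _.
rewrite mulr_sumr -big_split -sumrB /=; apply: eq_bigr => j _; ring.
Qed.

Lemma cauchy_schwarz_sqr a b :
  (\sum_i a i * b i) ^+ 2 <= (\sum_i a i ^+ 2) * (\sum_i b i ^+ 2).
Proof.
have : 0 <= \sum_i \sum_j (a i * b j - a j * b i) ^+ 2.
  by apply: sumr_ge0 => i _; apply: sumr_sqr_ge0.
by rewrite -lagrange_identity pmulr_rge0 // subr_ge0.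
Qed.

Lemma jensen_sqr w y : (forall i, 0 <= w i) -> \sum_i w i = 1 ->
  (\sum_i w i * y i) ^+ 2 <= \sum_i w i * y i ^+ 2.
Proof.
move=> w_ge0 w_sum1; set m := \sum_i w i * y i.
have : 0 <= \sum_i w i * (y i - m) ^+ 2.
  by apply: sumr_ge0 => i _; rewrite mulr_ge0 ?sqr_ge0.
rewrite (eq_bigr (fun i => w i * y i ^+ 2 - 2 * m * (w i * y i) + m ^+ 2 * w i));
  last by move=> i _; ring.
rewrite big_split sumrB /= -!mulr_sumr -/m w_sum1; lra.
Qed.

End SumsOfSquares.

Section SquareRoots.
Variable R : rcfType.

Lemma sqrtr_le (x y : R) : 0 <= y -> x <= y ^+ 2 -> Num.sqrt x <= y.
Proof. by move=> y_ge0 /ler_wsqrtr; rewrite sqrtr_sqr ger0_norm. Qed.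

Lemma sqrtr_le_mul (c x y : R) : 0 <= c -> x <= c ^+ 2 * y -> Num.sqrt x <= c * Num.sqrt y.
Proof.
by move=> c_ge0 /ler_wsqrtr; rewrite sqrtrM ?sqr_ge0 // sqrtr_sqr ger0_norm.
Qed.

Lemma cauchy_schwarz (I : finType) (a b : I -> R) :
  \sum_i a i * b i <= Num.sqrt (\sum_i a i ^+ 2) * Num.sqrt (\sum_i b i ^+ 2).
Proof.
rewrite -sqrtrM ?sumr_sqr_ge0 //; apply: le_trans (ler_norm _) _.
by rewrite -sqrtr_sqr ler_wsqrtr // cauchy_schwarz_sqr.
Qed.

End SquareRoots.

Section MatrixNorms.
Variable R : realType.

Lemma frob_ge0 m n (A : 'M[R]_(m, n)) : 0 <= frob A.
Proof. exact: sqrtr_ge0. Qed.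

Lemma frob_sqr m n (A : 'M[R]_(m, n)) : frob A ^+ 2 = \sum_i \sum_j A i j ^+ 2.
Proof. by rewrite sqr_sqrtr // sumr_ge0 // => i _; apply: sumr_sqr_ge0. Qed.

Lemma frob0 m n : frob (0 : 'M[R]_(m, n)) = 0.
Proof.
by rewrite /frob big1 ?sqrtr0 // => i _; rewrite big1 // => j _; rewrite mxE expr0n.
Qed.

Lemma ler_frobD m n (A B : 'M[R]_(m, n)) : frob (A + B) <= frob A + frob B.
Proof.
have dotAB : \sum_i \sum_j A i j * B i j <= frob A * frob B.
  by rewrite /frob !pair_big; apply: cauchy_schwarz.
apply: sqrtr_le; first by rewrite addr_ge0 ?frob_ge0.
have -> : \sum_i \sum_j (A + B) i j ^+ 2 =
    frob A ^+ 2 + frob B ^+ 2 + 2 * \sum_i \sum_j A i j * B i j.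
  rewrite !frob_sqr mulr_sumr -!big_split /=; apply: eq_bigr => i _.
  by rewrite mulr_sumr -!big_split /=; apply: eq_bigr => j _; rewrite mxE; ring.
lra.
Qed.

Lemma ler_frob_sum m n k (A : 'I_k -> 'M[R]_(m, n)) :
  frob (\sum_(h < k) A h) <= \sum_(h < k) frob (A h).
Proof.
elim/big_ind2: _ => [|A1 a1 A2 a2 le1 le2|//]; first by rewrite frob0.
by apply: le_trans (ler_frobD _ _) _; apply: lerD.
Qed.

Lemma vnorm2_ge0 m (v : 'cV[R]_m) : 0 <= vnorm2 v.
Proof. exact: sqrtr_ge0. Qed.

Lemma vnorm2_sqr m (v : 'cV[R]_m) : vnorm2 v ^+ 2 = \sum_i v i 0 ^+ 2.
Proof. by rewrite sqr_sqrtr // sumr_sqr_ge0. Qed.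

Lemma vnorm20 m : vnorm2 (0 : 'cV[R]_m) = 0.
Proof. by rewrite /vnorm2 big1 ?sqrtr0 // => i _; rewrite mxE expr0n. Qed.

Lemma vnorm2Z m (c : R) (v : 'cV[R]_m) : vnorm2 (c *: v) = `|c| * vnorm2 v.
Proof.
rewrite /vnorm2 -sqrtr_sqr -sqrtrM ?sqr_ge0 // mulr_sumr.
by congr Num.sqrt; apply: eq_bigr => i _; rewrite mxE exprMn.
Qed.

Lemma ler_vnorm2_mulmx_frob m n (W : 'M[R]_(m, n)) (v : 'cV[R]_n) :
  vnorm2 (W *m v) <= frob W * vnorm2 v.
Proof.
rewrite /vnorm2 /frob -sqrtrM ?sumr_ge0 // => [|i _]; last exact: sumr_sqr_ge0.
rewrite ler_wsqrtr // mulr_suml; apply: ler_sum => i _; rewrite mxE.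
exact: cauchy_schwarz_sqr.
Qed.

Lemma has_sup_specnorm m n (W : 'M[R]_(m, n)) :
  has_sup [set vnorm2 (W *m v) | v in [set v : 'cV[R]_n | vnorm2 v <= 1]].
Proof.
split; first by exists 0, 0; rewrite /= ?mulmx0 vnorm20.
exists (frob W) => _ [v /= v_le1 <-]; apply: le_trans (ler_vnorm2_mulmx_frob W v) _.
by rewrite ler_piMr ?frob_ge0.
Qed.

Lemma specnorm_ge0 m n (W : 'M[R]_(m, n)) : 0 <= specnorm W.
Proof.
apply: (sup_upper_bound (has_sup_specnorm W)).
by exists 0; rewrite /= ?mulmx0 vnorm20.
Qed.

Lemma ler_vnorm2_mulmx m n (W : 'M[R]_(m, n)) (v : 'cV[R]_n) :
  vnorm2 (W *m v) <= specnorm W * vnorm2 v.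
Proof.
have [v0|v_neq0] := eqVneq (vnorm2 v) 0.
  by apply: le_trans (ler_vnorm2_mulmx_frob W v) _; rewrite v0 !mulr0.
have v_gt0 : 0 < vnorm2 v by rewrite lt_def v_neq0 vnorm2_ge0.
rewrite -ler_pdivrMr // mulrC; apply: (sup_upper_bound (has_sup_specnorm W)).
have vV_ge0 : 0 <= (vnorm2 v)^-1 by rewrite invr_ge0 vnorm2_ge0.
exists ((vnorm2 v)^-1 *: v); first by rewrite /= vnorm2Z ger0_norm // mulVf.
by rewrite -scalemxAr vnorm2Z ger0_norm.
Qed.

Lemma ler_vnorm2_trmx_mulmx m n (W : 'M[R]_(m, n)) (u : 'cV[R]_m) :
  vnorm2 (W^T *m u) <= specnorm W * vnorm2 u.
Proof.
set w := W^T *m u.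
have dual : vnorm2 w ^+ 2 = \sum_i u i 0 * (W *m w) i 0.
  rewrite vnorm2_sqr; under [RHS]eq_bigr do rewrite mxE mulr_sumr.
  rewrite exchange_big /=; apply: eq_bigr => j _.
  by rewrite expr2 {1}/w mxE mulr_suml; apply: eq_bigr => i _; rewrite !mxE; ring.
have : vnorm2 w ^+ 2 <= specnorm W * vnorm2 u * vnorm2 w.
  rewrite dual (mulrC (specnorm W)) -mulrA; apply: le_trans (cauchy_schwarz _ _) _.
  by apply: ler_wpM2l; [exact: vnorm2_ge0 | exact: ler_vnorm2_mulmx].
have := mulr_ge0 (specnorm_ge0 W) (vnorm2_ge0 u); have := vnorm2_ge0 w; nra.
Qed.

Lemma ler_frob_mulmx m n p (Y : 'M[R]_(m, n)) (W : 'M[R]_(n, p)) :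
  frob (Y *m W) <= specnorm W * frob Y.
Proof.
apply: sqrtr_le_mul; first exact: specnorm_ge0.
rewrite mulr_sumr; apply: ler_sum => i _.
set u : 'cV[R]_n := (row i Y)^T.
have rowYW : \sum_j (Y *m W) i j ^+ 2 = vnorm2 (W^T *m u) ^+ 2.
  rewrite vnorm2_sqr; apply: eq_bigr => j _; rewrite !mxE; congr (_ ^+ 2).
  by apply: eq_bigr => k _; rewrite !mxE mulrC.
have rowY : \sum_j Y i j ^+ 2 = vnorm2 u ^+ 2.
  by rewrite vnorm2_sqr; apply: eq_bigr => j _; rewrite !mxE.
rewrite rowYW rowY -exprMn ler_pXn2r ?nnegrE ?vnorm2_ge0 ?ler_vnorm2_trmx_mulmx //.
by rewrite mulr_ge0 ?specnorm_ge0 ?vnorm2_ge0.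
Qed.

End MatrixNorms.

Section Centering.
Variable R : realType.

Lemma ler_frob_stochastic_mulmx m n d (A : 'M[R]_(m, n)) (Y : 'M[R]_(n, d)) (c : R) :
  (forall i j, 0 <= A i j) -> (forall i, \sum_j A i j = 1) ->
  (forall j, \sum_i A i j <= c) -> 0 <= c ->
  frob (A *m Y) <= Num.sqrt c * frob Y.
Proof.
move=> A_ge0 A_row1 A_col c_ge0; apply: sqrtr_le_mul; first exact: sqrtr_ge0.
rewrite sqr_sqrtr //.
apply: (@le_trans _ _ (\sum_i \sum_j \sum_k A i k * Y k j ^+ 2)).
  apply: ler_sum => i _; apply: ler_sum => j _; rewrite mxE.
  exact: jensen_sqr (A_ge0 i) (A_row1 i).
have -> : \sum_i \sum_j \sum_k A i k * Y k j ^+ 2 =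
    \sum_k \sum_j (\sum_i A i k) * Y k j ^+ 2.
  under eq_bigr do rewrite exchange_big /=.
  rewrite exchange_big; apply: eq_bigr => k _.
  by rewrite exchange_big; apply: eq_bigr => j _; rewrite mulr_suml.
rewrite mulr_sumr; apply: ler_sum => k _; rewrite mulr_sumr; apply: ler_sum => j _.
by rewrite ler_wpM2r ?sqr_ge0.
Qed.

Lemma HC_mulmxr m n d (Y : 'M[R]_(m, n)) (W : 'M[R]_(n, d)) : HC (Y *m W) = HC Y *m W.
Proof. exact: mulmxA. Qed.

Lemma HC_sum m d k (Y : 'I_k -> 'M[R]_(m, d)) : HC (\sum_(h < k) Y h) = \sum_(h < k) HC (Y h).
Proof. exact: mulmx_sumr. Qed.

Lemma HC_const_mulmx m k d (Y : 'M[R]_(k, d)) : HC (const_mx 1 *m Y : 'M[R]_(m, d)) = 0.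
Proof.
case: m => [|m]; first exact: flatmx0.
have JJ : (const_mx 1 : 'M[R]_m.+1) *m (const_mx 1 : 'M[R]_(m.+1, k)) =
    m.+1%:R *: const_mx 1.
  apply/matrixP => i j; rewrite !mxE (eq_bigr (fun _ => 1)) => [|l _]; last first.
    by rewrite !mxE mulr1.
  by rewrite sumr_const card_ord mulr1.
by rewrite /HC mulmxA mulmxBl mul1mx -scalemxAl JJ scalerA mulVf ?scale1r ?subrr ?mul0mx.
Qed.

Lemma HC_stochastic_mulmx m n d (A : 'M[R]_(m, n)) (X : 'M[R]_(n, d)) :
  (forall i, \sum_j A i j = 1) -> HC (A *m X) = HC (A *m HC X).
Proof.
move=> A_row1.
have A_const : A *m const_mx 1 = const_mx 1 :> 'M[R]_(m, n).
  apply/matrixP => i j; rewrite !mxE -[RHS](A_row1 i).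
  by apply: eq_bigr => k _; rewrite mxE mulr1.
have X_split : X = HC X + n%:R^-1 *: (const_mx 1 *m X).
  by rewrite /HC mulmxBl mul1mx -scalemxAl subrK.
rewrite {1}X_split mulmxDr -scalemxAr (mulmxA A (const_mx 1)) A_const.
by rewrite [LHS]/HC mulmxDr -scalemxAr -!/(HC _) HC_const_mulmx scaler0 addr0.
Qed.

Lemma HC_entry n d (Z : 'M[R]_(n, d)) i j : HC Z i j = Z i j - n%:R^-1 * \sum_k Z k j.
Proof.
rewrite /HC mulmxBl mul1mx -scalemxAl !mxE; congr (_ - _ * _).
by apply: eq_bigr => k _; rewrite mxE mul1r.
Qed.

Lemma sumr_center_sqr_le n (z : 'I_n -> R) :
  \sum_i (z i - n%:R^-1 * \sum_k z k) ^+ 2 <= \sum_i z i ^+ 2.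
Proof.
case: n z => [|n] z; first by rewrite !big_ord0.
set S := \sum_k z k; set mean := n.+1%:R^-1 * S.
have sum_mean : n.+1%:R * mean = S by rewrite mulrA divff ?mul1r.
rewrite (eq_bigr (fun i => z i ^+ 2 - 2 * mean * z i + mean ^+ 2)) => [|i _]; last by ring.
rewrite big_split sumrB /= -mulr_sumr sumr_const card_ord -mulr_natl -/S -sum_mean.
have : 0 <= n.+1%:R * mean ^+ 2 :> R by rewrite mulr_ge0 ?sqr_ge0.
lra.
Qed.

Lemma ler_frob_HC n d (Z : 'M[R]_(n, d)) : frob (HC Z) <= frob Z.
Proof.
rewrite ler_wsqrtr // exchange_big [leRHS]exchange_big /=; apply: ler_sum => j _.
under eq_bigr do rewrite HC_entry.
exact: sumr_center_sqr_le.
Qed.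

End Centering.

Section Softmax.
Variables (R : realType) (n : nat) (P : 'M[R]_n).

Lemma softmax_den_gt0 i : 0 < \sum_t expR (P i t).
Proof.
rewrite (bigD1 i) //=; apply: lt_le_trans (expR_gt0 (P i i)) _.
by rewrite lerDl sumr_ge0 // => t _; rewrite expR_ge0.
Qed.

Lemma softmax_ge0 i j : 0 <= softmax P i j.
Proof. by rewrite mxE divr_ge0 ?expR_ge0 // ltW // softmax_den_gt0. Qed.

Lemma softmax_row_sum i : \sum_j softmax P i j = 1.
Proof.
under eq_bigr do rewrite mxE.
by rewrite -mulr_suml divff // gt_eqF // softmax_den_gt0.
Qed.

Variable a : R.
Hypothesis P_le : forall i j, `|P i j| <= a.

Lemma softmax_le i j : softmax P i j <= expR (2 * a) / (expR (2 * a) + n%:R - 1).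
Proof.
rewrite mxE; set E := expR (2 * a); set S := \sum_t expR (P i t); set x := expR (P i j).
have S_gt0 : 0 < S by apply: softmax_den_gt0.
have n_ge1 : 1 <= n%:R :> R by rewrite ler1n (leq_ltn_trans _ (ltn_ord i)).
have E_gt0 : 0 < E by apply: expR_gt0.
have x_le : forall t, x <= E * expR (P i t).
  move=> t; rewrite -expRD ler_expR.
  by move: (P_le i j) (P_le i t); rewrite !ler_norml => /andP[? ?] /andP[? ?]; lra.
have sum_gap : \sum_t (E * expR (P i t) - x) = E * S - n%:R * x.
  by rewrite sumrB -mulr_sumr sumr_const card_ord mulr_natl.
have : E * x - x <= E * S - n%:R * x.
  rewrite -sum_gap (bigD1 j) //= lerDl sumr_ge0 // => t _.
  by rewrite subr_ge0 x_le.
have D_gt0 : 0 < E + n%:R - 1 by lra.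
by rewrite ler_pdivrMr // mulrAC ler_pdivlMr //; nra.
Qed.

Lemma ler_frob_HC_softmax_mulmx d (X : 'M[R]_(n, d)) :
  frob (HC (softmax P *m X)) <=
    Num.sqrt (n%:R * expR (2 * a) / (expR (2 * a) + n%:R - 1)) * frob (HC X).
Proof.
rewrite (HC_stochastic_mulmx _ softmax_row_sum); apply: le_trans (ler_frob_HC _) _.
apply: ler_frob_stochastic_mulmx; [exact: softmax_ge0 | exact: softmax_row_sum | |].
  move=> j; apply: (@le_trans _ _ (\sum_(i < n) expR (2 * a) / (expR (2 * a) + n%:R - 1))).
    by apply: ler_sum => i _; apply: softmax_le.
  by rewrite sumr_const card_ord -mulrA (mulr_natl (_ / _)).
have [->|n_gt0] := posnP n; first by rewrite mul0r.
apply: divr_ge0; first by rewrite mulr_ge0 ?expR_ge0.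
have : 1 <= n%:R :> R by rewrite ler1n.
have := expR_gt0 (2 * a); lra.
Qed.

End Softmax.

Theorem proposition4 (R : realType) (n d H : nat) (hH : (1 <= H)%N)
  (P : 'I_H -> 'M[R]_n) (WV WO : 'I_H -> 'M[R]_d) (X : 'M[R]_(n, d)) :
  let alpha := \big[Num.max/0]_(h < H) \big[Num.max/0]_(i < n)
                 \big[Num.max/0]_(j < n) `|P h i j| in
  let sigma1 := \big[Num.max/0]_(h < H) specnorm (WV h) in
  let sigma2 := \big[Num.max/0]_(h < H) specnorm (WO h) in
  frob (HC (MSA P WV WO X)) <=
    sigma1 * sigma2 * H%:R *
    Num.sqrt (n%:R * expR (2 * alpha) / (expR (2 * alpha) + n%:R - 1)) *
    frob (HC X).
Proof.
cbv zeta; set alpha := \big[Num.max/0]_(h < H) _.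
set sigma1 := \big[Num.max/0]_(h < H) specnorm (WV h).
set sigma2 := \big[Num.max/0]_(h < H) specnorm (WO h).
set c := Num.sqrt _; set f := frob (HC X).
have P_le h i j : `|P h i j| <= alpha.
  apply: le_trans (le_bigmax _ _ h); apply: le_trans (le_bigmax _ _ i).
  exact: le_bigmax.
have head h : frob (HC (softmax (P h) *m X *m WV h *m WO h)) <= sigma2 * (sigma1 * (c * f)).
  rewrite 2!HC_mulmxr; apply: le_trans (ler_frob_mulmx _ _) _.
  apply: ler_pM; [exact: specnorm_ge0 | exact: frob_ge0 | exact: le_bigmax |].
  apply: le_trans (ler_frob_mulmx _ _) _.
  apply: ler_pM; [exact: specnorm_ge0 | exact: frob_ge0 | exact: le_bigmax |].
  exact: (ler_frob_HC_softmax_mulmx (P_le h) X).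
rewrite /MSA HC_sum; apply: le_trans (ler_frob_sum _) _.
apply: le_trans (ler_sum _ (fun h _ => head h)) _.
by rewrite sumr_const card_ord -mulr_natr; lra.
Qed.
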